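(* Let $n\ge 2$, $N=2^n$, $s=(N-1)/2$. Consider the unrestricted close Hadamard problem: given oracle access (via $\hat U_z$) to a string $z\in C=A\cup B$, where $A=\Xi^{(N)}_{N/2-1}$ and $B=\bigcup_{k=0}^{N/2-2}\Xi^{(N)}_k$, decide whether $z\in A$ or $z\in B$. For every $\delta>0$ there is a number $q$ depending only on $\delta$ (not on $n$) and a quantum algorithm making $q$ queries to $\hat U_z$ that, for every $z\in C$, decides correctly with error probability at most $\delta$; the algorithm consists of $q$ independent runs of the circuit that prepares $\tfrac1{\sqrt2}(|\tfrac12\rangle_s+|-\tfrac12\rangle_s)$, applies $\hat H^{\otimes n}$, $\hat U_z$, $\hat H^{\otimes n}$ (followed by a fixed $z$-independent unitary) and measures in the spin basis, together with classical post-processing of the outcomes.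
   Context: Work in $\mathbb{C}^N$ with computational basis $\{|y\rangle : y=0,\dots,N-1\}$; spin basis states $|m\rangle_s$, $m\in\{-s,\dots,s\}$, are identified via $|m\rangle_s=|m+s\rangle$. For $x,y\in\{0,\dots,N-1\}$, $x\cdot y\in\{0,1\}$ is the mod-2 inner product of their $n$-bit binary expansions; $\hat H^{\otimes n}|y\rangle=N^{-1/2}\sum_x(-1)^{x\cdot y}|x\rangle$. The Hadamard codeword $W^{(N)}_j\in\{0,1\}^N$ has bit $x\cdot j$ at position $x$. For $z\in\{0,1\}^N$ the oracle is the diagonal unitary $\hat U_z|x\rangle=(-1)^{z_x}|x\rangle$; a query is one application of $\hat U_z$. The set $\Xi^{(N)}_j$ (codewords with unrestricted errors) consists of all strings $z\in\{0,1\}^N$ at Hamming distance strictly less than $N/16$ from $W^{(N)}_j$. *)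

From HB Require Import structures.
From mathcomp Require Import all_boot all_order all_algebra.
From mathcomp Require Import complex.
From mathcomp Require Import Rstruct.
From Stdlib Require Rdefinitions.
Unset Printing Implicit Defensive.
Import Order.TTheory GRing.Theory Num.Theory.
Local Open Scope ring_scope.
Local Open Scope complex_scope.

Notation RR := Rdefinitions.R.
Notation CC := (complex RR).

Definition Ndim (n : nat) : nat := (2 ^ n)%N.

Definition bdot (n x y : nat) : bool :=
  odd (\sum_(i < n) (odd (x %/ 2 ^ i) && odd (y %/ 2 ^ i)))%N.

Definition codeword (n : nat) (j : nat) : {ffun 'I_(Ndim n) -> bool} :=
  [ffun x : 'I_(Ndim n) => bdot n x j].

Definition hamming (n : nat) (z w : {ffun 'I_(Ndim n) -> bool}) : nat :=
  #|[set x | z x != w x]|.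

Definition Xi (n j : nat) : {set {ffun 'I_(Ndim n) -> bool}} :=
  [set z | (16 * hamming n z (codeword n j) < Ndim n)%N].

Definition hadA (n : nat) := Xi n (Ndim n %/ 2 - 1)%N.
Definition hadB (n : nat) := \bigcup_(k < (Ndim n %/ 2 - 1)%N) Xi n k.
Definition hadC (n : nat) := hadA n :|: hadB n.

Definition hadamard (n : nat) : 'M[CC]_(Ndim n) :=
  \matrix_(x, y) ((-1) ^+ bdot n x y / (Num.sqrt ((Ndim n)%:R : RR))%:C).

Definition oracle (n : nat) (z : {ffun 'I_(Ndim n) -> bool}) : 'M[CC]_(Ndim n) :=
  diag_mx (\row_x ((-1) ^+ z x)).

(* initial state (|1/2>_s + |-1/2>_s)/sqrt 2, with |m>_s = |m+s>, s=(N-1)/2: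
   i.e. (|N/2> + |N/2 - 1>)/sqrt 2 *)
Definition psi0 (n : nat) : 'cV[CC]_(Ndim n) :=
  \col_y
    (if ((y : nat) == (Ndim n %/ 2)%N) || ((y : nat) == (Ndim n %/ 2 - 1)%N)
     then 1 / (Num.sqrt (2%:R : RR))%:C else 0).

Definition unitary (m : nat) (V : 'M[CC]_m) : Prop :=
  V *m (map_mx (@conjc RR) V)^T = 1%:M.

Definition out_state (n : nat) (V : 'M[CC]_(Ndim n))
  (z : {ffun 'I_(Ndim n) -> bool}) : 'cV[CC]_(Ndim n) :=
  V *m (hadamard n *m (oracle n z *m (hadamard n *m psi0 n))).

(* Born probability of outcome y (spin basis = computational basis up to relabeling) *)
Definition outcome_prob (n : nat) (V : 'M[CC]_(Ndim n))
  (z : {ffun 'I_(Ndim n) -> bool}) (y : 'I_(Ndim n)) : RR :=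
  let a := out_state n V z y 0 in (complex.Re a) ^+ 2 + (complex.Im a) ^+ 2.

Definition success_prob (n q : nat) (V : 'M[CC]_(Ndim n))
  (f : {ffun 'I_q -> 'I_(Ndim n)} -> bool)
  (z : {ffun 'I_(Ndim n) -> bool}) (b : bool) : RR :=
  \sum_(ys : {ffun 'I_q -> 'I_(Ndim n)} | f ys == b)
     \prod_(i < q) outcome_prob n V z (ys i).

From mathcomp Require Import all_boot all_order all_algebra.
From mathcomp Require Import complex Rstruct.
From mathcomp Require Import ring lra zify.
Import Order.TTheory GRing.Theory Num.Theory.
Local Open Scope ring_scope.

(* Take V = 1.  The amplitude of outcome 0 after one run is
   (N sqrt 2)^-1 sum_x (-1)^(z_x) ((-1)^(x.(N/2)) + (-1)^(x.(N/2-1))).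
   By orthogonality of the characters of (Z/2)^n it equals 1/sqrt 2 at the
   codeword W_(N/2-1) and 0 at every W_k with k < N/2-1, and each flipped bit
   of z moves it by at most 4/(N sqrt 2); hence outcome 0 has probability at
   least 9/32 on A and at most 1/32 on B.  Answering "A" iff outcome 0 occurs
   at least k times in 8k runs errs with probability at most (2/3)^k, by an
   exponential Markov bound on the number of occurrences. *)

Definition sgnb (b : bool) : RR := (-1) ^+ b.

Lemma sgnb_mul_self (b : bool) : sgnb b * sgnb b = 1.
Proof. by rewrite -expr2 sqrr_sign. Qed.

Lemma normr_sgnbB a b : `|sgnb a - sgnb b| = if a != b then 2 else 0.
Proof.
rewrite /sgnb; case: a; case: b; rewrite ?expr0 ?expr1 ?subrr ?normr0 //=.
  by rewrite -opprD normrN (_ : 1 + 1 = 2%:R) ?normr_nat.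
by rewrite opprK (_ : 1 + 1 = 2%:R) ?normr_nat.
Qed.

Lemma normr_sgnbD a b : `|sgnb a + sgnb b| <= 2.
Proof.
apply: le_trans (ler_normD _ _) _.
by rewrite /sgnb !normr_sign (_ : 1 + 1 = 2%:R).
Qed.

Lemma bdotS n x y : bdot n.+1 x y = (odd x && odd y) (+) bdot n x./2 y./2.
Proof.
rewrite /bdot big_ord_recl /= expn0 !divn1 oddD; congr (_ (+) odd _).
  by case: (odd x && odd y).
by apply: eq_bigr => i _; rewrite /bump /= add1n expnS !divnMA !divn2.
Qed.

Lemma bdot0l n y : bdot n 0 y = false.
Proof. by rewrite /bdot big1 // => i _; rewrite div0n. Qed.

Lemma big_nat_double (R : nmodType) (F : nat -> R) m :
  \sum_(0 <= x < m.*2) F x = \sum_(0 <= x < m) (F x.*2 + F x.*2.+1).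
Proof.
elim: m => [|m IH]; first by rewrite !big_geq.
by rewrite doubleS !big_nat_recr //= IH addrA.
Qed.

Lemma half_lt_exp2S n a : (a < 2 ^ n.+1)%N -> (a./2 < 2 ^ n)%N.
Proof. by rewrite -divn2 ltn_divLR // muln2 -mul2n -expnS. Qed.

Lemma sum_sgnb_bdot n a b : (a < 2 ^ n)%N -> (b < 2 ^ n)%N ->
  \sum_(0 <= x < 2 ^ n) sgnb (bdot n x a) * sgnb (bdot n x b) =
  if a == b then (2 ^ n)%:R else 0.
Proof.
elim: n a b => [|n IH] a b ha hb.
  have [-> ->] : a = 0%N /\ b = 0%N by move: ha hb; rewrite expn0; lia.
  by rewrite big_nat1 bdot0l mulr1.
have ->: (2 ^ n.+1 = (2 ^ n).*2)%N by rewrite expnS mul2n.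
rewrite big_nat_double.
under eq_bigr => x _ do
  rewrite !bdotS /= odd_double uphalf_double half_double /sgnb !signr_addb.
rewrite (eq_bigr (fun x => (1 + sgnb (odd a) * sgnb (odd b)) *
                          (sgnb (bdot n x a./2) * sgnb (bdot n x b./2)))); last first.
  by move=> x _; rewrite /sgnb; ring.
rewrite -mulr_sumr IH ?half_lt_exp2S //.
have [Ea Eb] := (odd_double_half a, odd_double_half b).
have [h2|h2] := eqVneq a./2 b./2; last first.
  by rewrite mulr0 ifN //; apply: contra_neq h2 => ->.
have [h1|h1] := eqVneq (odd a) (odd b).
  rewrite h1 sgnb_mul_self ifT; last by rewrite -Ea -Eb h1 h2.
  by rewrite -mul2n natrM; ring.
rewrite ifN; last by apply: contra_neq h1 => ->.
by move: h1; rewrite /sgnb; case: (odd a); case: (odd b) => //= _; ring.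
Qed.

Section Amplification.

Variables (Y : finType) (P : Y -> RR) (y0 : Y).
Hypotheses (P_ge0 : forall y, 0 <= P y) (P_sum1 : \sum_y P y = 1).

Lemma sum_prod_ffun q (F : Y -> RR) :
  \sum_(ys : {ffun 'I_q -> Y}) \prod_i F (ys i) = (\sum_y F y) ^+ q.
Proof.
by rewrite -(bigA_distr_bigA (fun (i : 'I_q) (y : Y) => F y)) prodr_const card_ord.
Qed.

Lemma sum_prod_ffun_compl q (Q : pred {ffun 'I_q -> Y}) :
  \sum_(ys | Q ys) \prod_i P (ys i) = 1 - \sum_(ys | ~~ Q ys) \prod_i P (ys i).
Proof.
have total : \sum_(ys : {ffun 'I_q -> Y}) \prod_i P (ys i) = 1.
  by rewrite sum_prod_ffun P_sum1 expr1n.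
by rewrite -[X in _ = X - _]total [in RHS](bigID Q) /= addrK.
Qed.

Definition hits {q} (ys : {ffun 'I_q -> Y}) : nat := \sum_(i < q) (ys i == y0).

Lemma sum_prod_ffun_hits q c :
  \sum_(ys : {ffun 'I_q -> Y}) \prod_i P (ys i) * c ^+ hits ys =
  (1 + (c - 1) * P y0) ^+ q.
Proof.
under eq_bigr => ys _ do rewrite -prodrXr -big_split.
rewrite (sum_prod_ffun _ (fun y => P y * c ^+ (y == y0))).
congr (_ ^+ _).
rewrite (eq_bigr (fun y => P y + if y == y0 then (c - 1) * P y else 0)).
  by rewrite big_split /= P_sum1 -big_mkcond big_pred1_eq.
by move=> y _; case: (y == y0); ring.
Qed.

Lemma exp_markov_hits q c k (Q : pred {ffun 'I_q -> Y}) : 0 < c ->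
  (forall ys, Q ys -> c ^+ k <= c ^+ hits ys) ->
  \sum_(ys | Q ys) \prod_i P (ys i) <= (1 + (c - 1) * P y0) ^+ q / c ^+ k.
Proof.
move=> c_gt0 hQ; have ck_gt0 : 0 < c ^+ k by rewrite exprn_gt0.
rewrite -sum_prod_ffun_hits mulr_suml.
apply: le_trans (_ : \sum_(ys | Q ys) \prod_i P (ys i) * c ^+ hits ys / c ^+ k <= _).
  apply: ler_sum => ys Qys; rewrite -mulrA ler_peMr ?prodr_ge0 //.
  by rewrite ler_pdivlMr // mul1r hQ.
rewrite [X in _ <= X](bigID Q) /= lerDl sumr_ge0 // => ys _.
by rewrite !mulr_ge0 ?prodr_ge0 ?exprn_ge0 ?invr_ge0 ?ltW.
Qed.

Lemma hits_test_false_pos k : P y0 <= 1 / 32 ->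
  \sum_(ys : {ffun 'I_(8 * k) -> Y} | (k <= hits ys)%N) \prod_i P (ys i)
    <= (2 / 3) ^+ k.
Proof.
move=> Py0_small; have Py0_ge0 := P_ge0 y0.
apply: le_trans (@exp_markov_hits _ 2 k _ _ _) _ => //.
  by move=> ys hk; rewrite ler_eXn2l //; lra.
have u_ge0 : 0 <= 1 + (2 - 1) * P y0 by lra.
have u8_le : (1 + (2 - 1) * P y0) ^+ 8 <= (33 / 32) ^+ 8.
  by apply: lerXn2r; rewrite ?nnegrE; lra.
have c8_le : (33 / 32) ^+ 8 <= 4 / 3 :> RR by rewrite !exprS expr0; lra.
rewrite exprM -expr_div_n; apply: lerXn2r; rewrite ?nnegrE.
- by rewrite divr_ge0 ?exprn_ge0.
- lra.
- lra.
Qed.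

Lemma hits_test_false_neg k : 9 / 32 <= P y0 ->
  \sum_(ys : {ffun 'I_(8 * k) -> Y} | ~~ (k <= hits ys)%N) \prod_i P (ys i)
    <= (2 / 3) ^+ k.
Proof.
move=> Py0_large.
have Py0_le1 : P y0 <= 1 by rewrite -P_sum1 (bigD1 y0) //= lerDl sumr_ge0.
apply: le_trans (@exp_markov_hits _ 2^-1 k _ _ _) _.
- by rewrite invr_gt0 ltr0n.
- have half_gt0 : 0 < 2^-1 :> RR by rewrite invr_gt0 ltr0n.
  have half_lt1 : 2^-1 < 1 :> RR by rewrite invf_lt1 ?ltr0n ?ltr1n.
  move=> ys; rewrite -ltnNge => hk.
  by rewrite (ler_iXn2l half_gt0 half_lt1) ltnW.
have u_ge0 : 0 <= 1 + (2^-1 - 1) * P y0 by lra.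
have u8_le : (1 + (2^-1 - 1) * P y0) ^+ 8 <= (55 / 64) ^+ 8.
  by apply: lerXn2r; rewrite ?nnegrE; lra.
have c8_le : (55 / 64) ^+ 8 <= 1 / 3 :> RR by rewrite !exprS expr0; lra.
rewrite exprM -exprVn invrK -exprMn_comm; last exact: mulrC.
apply: lerXn2r; rewrite ?nnegrE.
- by rewrite mulr_ge0 ?exprn_ge0 ?ler0n.
- lra.
- lra.
Qed.

Lemma hits_test_correct k (b : bool) :
  (if b then 9 / 32 <= P y0 else P y0 <= 1 / 32) ->
  1 - (2 / 3) ^+ k <=
  \sum_(ys : {ffun 'I_(8 * k) -> Y} | (k <= hits ys)%N == b) \prod_i P (ys i).
Proof.
rewrite sum_prod_ffun_compl lerD2l lerN2; case: b => Py0.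
  by under eq_bigl => ys do rewrite eqb_id; apply: hits_test_false_neg.
by under eq_bigl => ys do rewrite eqbF_neg negbK; apply: hits_test_false_pos.
Qed.

End Amplification.

Arguments hits {Y} y0 {q} ys.

Lemma exists_expr_le {d : RR} : 0 < d -> exists k : nat, (2 / 3) ^+ k <= d.
Proof.
move=> d_gt0; have [i hi] : exists i, d^-1 < 2 ^+ i.
  by exists (Num.bound d^-1); apply: upper_nthrootP.
exists (2 * i)%N; rewrite exprM.
apply: le_trans (_ : (2 ^+ i)^-1 <= d).
  by rewrite -exprVn; apply: lerXn2r; rewrite ?nnegrE ?expr2; lra.
have two_i_gt0 : 0 < 2 ^+ i :> RR by rewrite exprn_gt0 ?ltr0n.
by rewrite -[leRHS]invrK lef_pV2 ?posrE ?invr_gt0 // ltW.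
Qed.

Lemma unitary1 m : unitary m 1%:M.
Proof.
rewrite /unitary mul1mx; apply/matrixP => i j; rewrite !mxE eq_sym.
by case: (i == j); apply/eqP; rewrite eq_complex /= ?oppr0 ?eqxx.
Qed.

Lemma sum_sqr_col m (v : 'cV[RR]_m) : \sum_i v i 0 ^+ 2 = (v^T *m v) 0 0.
Proof. by rewrite mxE; apply: eq_bigr => i _; rewrite mxE expr2. Qed.

Lemma orthogonal_mulmx_norm m (A : 'M[RR]_m) (v : 'cV[RR]_m) :
  A^T *m A = 1%:M -> (A *m v)^T *m (A *m v) = v^T *m v.
Proof. by move=> AtA; rewrite trmx_mul mulmxA -(mulmxA _ _ A) AtA mulmx1. Qed.

Lemma sum_ord_pred2 m a b (F : nat -> RR) : a != b -> (a < m)%N -> (b < m)%N ->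
  \sum_(y < m) (if (y == a :> nat) || (y == b :> nat) then F y else 0) = F a + F b.
Proof.
move=> ab am bm; rewrite -big_mkcond (bigD1 (Ordinal am)) ?eqxx //=.
rewrite (bigD1 (Ordinal bm)) /=; last by rewrite eqxx orbT -val_eqE /= eq_sym.
rewrite big1 ?addr0 // => y /andP [/andP [yab ya] yb].
by move: yab ya yb; rewrite -!val_eqE /= => /orP [] /eqP ->; rewrite eqxx.
Qed.

Lemma sum_sgnb_lipschitz (T : finType) (z w : T -> bool) (s : T -> RR) B :
  (forall x, `|s x| <= B) ->
  `|\sum_x sgnb (z x) * s x - \sum_x sgnb (w x) * s x|
    <= 2 * B * #|[set x | z x != w x]|%:R.
Proof.
move=> sB; rewrite -sumrB; apply: le_trans (ler_norm_sum _ _ _) _.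
apply: le_trans (_ : \sum_x (if z x != w x then 2 * B else 0) <= _).
  apply: ler_sum => x _; rewrite -mulrBl normrM normr_sgnbB.
  by case: ifP => _; rewrite ?mul0r ?lexx ?ler_wpM2l ?ler0n.
by rewrite -big_mkcond sumr_const cardsE mulr_natr.
Qed.

Lemma Ndim_gt0 n : (0 < Ndim n)%N.
Proof. by rewrite expn_gt0. Qed.

Lemma sqrt_Ndim_sqr n : Num.sqrt (Ndim n)%:R ^+ 2 = (Ndim n)%:R :> RR.
Proof. by rewrite sqr_sqrtr ?ler0n. Qed.

Section Circuit.

Variable n : nat.
Hypothesis n_gt0 : (0 < n)%N.

Definition hadamardR : 'M[RR]_(Ndim n) :=
  \matrix_(x, y) (sgnb (bdot n x y) / Num.sqrt (Ndim n)%:R).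

Definition oracleR (z : {ffun 'I_(Ndim n) -> bool}) : 'M[RR]_(Ndim n) :=
  diag_mx (\row_x sgnb (z x)).

Definition psi0R : 'cV[RR]_(Ndim n) :=
  \col_y (if ((y : nat) == (Ndim n %/ 2)%N) || ((y : nat) == (Ndim n %/ 2 - 1)%N)
          then 1 / Num.sqrt 2%:R else 0).

Definition stateR z : 'cV[RR]_(Ndim n) :=
  hadamardR *m (oracleR z *m (hadamardR *m psi0R)).

Lemma out_state1E z : out_state n 1 z = map_mx (real_complex RR) (stateR z).
Proof.
rewrite /out_state mul1mx.
have -> : hadamard n = map_mx (real_complex RR) hadamardR.
  by apply/matrixP => i j; rewrite !mxE rmorphM rmorph_sign fmorphV.
have -> : oracle n z = map_mx (real_complex RR) (oracleR z).
  by apply/matrixP => i j; rewrite !mxE rmorphMn rmorph_sign.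
have -> : psi0 n = map_mx (real_complex RR) psi0R.
  apply/matrixP => i j; rewrite !mxE; case: ifP => _ //.
  by rewrite rmorphM rmorph1 fmorphV.
by rewrite !map_mxM.
Qed.

Lemma outcome_prob1E z y : outcome_prob n 1 z y = stateR z y 0 ^+ 2.
Proof. by rewrite /outcome_prob out_state1E mxE /= expr0n addr0. Qed.

Lemma outcome_prob1_ge0 z y : 0 <= outcome_prob n 1 z y.
Proof. by rewrite outcome_prob1E sqr_ge0. Qed.

Lemma hadamardR_orthogonal : hadamardR^T *m hadamardR = 1%:M.
Proof.
apply/matrixP => i j; rewrite !mxE.
under eq_bigr => x _ do rewrite !mxE mulrACA -invfM -expr2 sqrt_Ndim_sqr.
rewrite -mulr_suml -(big_mkord xpredT (fun x => sgnb (bdot n x i) * sgnb (bdot n x j))).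
rewrite sum_sgnb_bdot ?ltn_ord //.
rewrite val_eqE; case: eqP => _; last by rewrite mul0r.
by rewrite mulfV // pnatr_eq0 -lt0n Ndim_gt0.
Qed.

Lemma oracleR_orthogonal z : (oracleR z)^T *m oracleR z = 1%:M.
Proof.
rewrite tr_diag_mx mulmx_diag; apply/matrixP => i j; rewrite !mxE.
by rewrite sgnb_mul_self.
Qed.

Let half_facts : (0 < Ndim n %/ 2)%N /\ Ndim n = (Ndim n %/ 2).*2.
Proof.
by case: n n_gt0 => // m _; rewrite /Ndim expnS mulKn // mul2n expn_gt0.
Qed.

Let half_neq : (Ndim n %/ 2)%N != (Ndim n %/ 2 - 1)%N.
Proof. by case: half_facts; lia. Qed.

Let half_lt : (Ndim n %/ 2 < Ndim n)%N.
Proof. by case: half_facts; lia. Qed.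

Let half_pred_lt : (Ndim n %/ 2 - 1 < Ndim n)%N.
Proof. by case: half_facts; lia. Qed.

Lemma psi0R_norm : \sum_y psi0R y 0 ^+ 2 = 1.
Proof.
under eq_bigr => y _ do rewrite mxE (fun_if (fun a => a ^+ 2)) expr0n /=.
rewrite (@sum_ord_pred2 _ _ _ (fun=> (1 / Num.sqrt 2%:R) ^+ 2) half_neq half_lt half_pred_lt).
by rewrite expr_div_n sqr_sqrtr ?ler0n // expr1n; field.
Qed.

Lemma sum_outcome_prob1 z : \sum_y outcome_prob n 1 z y = 1.
Proof.
under eq_bigr => y _ do rewrite outcome_prob1E.
rewrite sum_sqr_col /stateR !orthogonal_mulmx_norm ?hadamardR_orthogonal ?oracleR_orthogonal //.
by rewrite -sum_sqr_col psi0R_norm.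
Qed.

Definition out0 : 'I_(Ndim n) := Ordinal (Ndim_gt0 n).

Definition corr (z : {ffun 'I_(Ndim n) -> bool}) : RR :=
  \sum_x sgnb (z x) *
    (sgnb (bdot n x (Ndim n %/ 2)) + sgnb (bdot n x (Ndim n %/ 2 - 1))).

Lemma stateR_out0 z :
  stateR z out0 0 = corr z / ((Ndim n)%:R * Num.sqrt 2%:R).
Proof.
rewrite mxE /corr mulr_suml; apply: eq_bigr => x _.
rewrite mxE mul_diag_mx !mxE bdot0l.
under eq_bigr => y _ do rewrite !mxE (fun_if (fun a => _ * a)) mulr0.
rewrite (@sum_ord_pred2 _ _ _
  (fun y => sgnb (bdot n x y) / Num.sqrt (Ndim n)%:R * (1 / Num.sqrt 2%:R))
  half_neq half_lt half_pred_lt).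
have sqrtN_gt0 : 0 < Num.sqrt (Ndim n)%:R :> RR by rewrite sqrtr_gt0 ltr0n Ndim_gt0.
have sqrt2_gt0 : 0 < Num.sqrt 2%:R :> RR by rewrite sqrtr_gt0 ltr0n.
rewrite -[in RHS](sqrt_Ndim_sqr n) /sgnb expr0.
by field; rewrite !gt_eqF.
Qed.

Lemma outcome_prob1_out0 z :
  outcome_prob n 1 z out0 = (corr z / (Ndim n)%:R) ^+ 2 / 2.
Proof.
by rewrite outcome_prob1E stateR_out0 invfM mulrA exprMn exprVn sqr_sqrtr ?ler0n.
Qed.

Lemma corr_codeword k : (k < Ndim n)%N ->
  corr (codeword n k) =
  (Ndim n)%:R * ((k == Ndim n %/ 2)%N%:R + (k == Ndim n %/ 2 - 1)%N%:R).
Proof.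
move=> k_lt; rewrite /corr.
under eq_bigr => x _ do rewrite ffunE mulrDr.
rewrite big_split /=.
rewrite -(big_mkord xpredT (fun x => sgnb (bdot n x k) * sgnb (bdot n x (Ndim n %/ 2)))).
rewrite -(big_mkord xpredT (fun x => sgnb (bdot n x k) * sgnb (bdot n x (Ndim n %/ 2 - 1)))).
by rewrite !sum_sgnb_bdot // mulrDr !mulr_natr !mulrb.
Qed.

Lemma corr_near_codeword z k :
  (16 * hamming n z (codeword n k) < Ndim n)%N -> (k < Ndim n)%N ->
  `|corr z / (Ndim n)%:R -
    ((k == Ndim n %/ 2)%N%:R + (k == Ndim n %/ 2 - 1)%N%:R)| < 1 / 4.
Proof.
move=> close k_lt; have N_gt0 : 0 < (Ndim n)%:R :> RR by rewrite ltr0n Ndim_gt0.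
have lip : `|corr z - corr (codeword n k)|
            <= 2 * 2 * (hamming n z (codeword n k))%:R.
  by apply: sum_sgnb_lipschitz => x; apply: normr_sgnbD.
have {}close : 16 * (hamming n z (codeword n k))%:R < (Ndim n)%:R :> RR.
  by rewrite -natrM ltr_nat.
rewrite corr_codeword // in lip.
set c := (_ %:R + _ %:R) in lip *.
rewrite -(mulfK (lt0r_neq0 N_gt0) c) -mulrBl normrM normfV (gtr0_norm N_gt0).
rewrite ltr_pdivrMr // [c * _]mulrC; lra.
Qed.

Lemma outcome_prob1_out0_hadA z : z \in hadA n -> 9 / 32 <= outcome_prob n 1 z out0.
Proof.
rewrite inE => close; have := corr_near_codeword _ _ close half_pred_lt.
rewrite eqxx eq_sym (negbTE half_neq) outcome_prob1_out0 /=.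
set t := corr z / _; rewrite ltr_norml => /andP [lo _].
have : 3 / 4 < t by lra.
rewrite expr2; nra.
Qed.

Lemma outcome_prob1_out0_hadB z : z \in hadB n -> outcome_prob n 1 z out0 <= 1 / 32.
Proof.
case/bigcupP=> k _; rewrite inE => close.
have k_lt : (k < Ndim n %/ 2 - 1)%N by [].
have := corr_near_codeword _ _ close (ltn_trans k_lt half_pred_lt).
have k_lt' : (k < Ndim n %/ 2)%N by lia.
rewrite (ltn_eqF k_lt) (ltn_eqF k_lt') outcome_prob1_out0 /=.
set t := corr z / _; rewrite ltr_norml => /andP [lo hi].
rewrite expr2; nra.
Qed.

End Circuit.

Theorem claim2 :
  forall delta : RR, 0 < delta ->
  exists q : nat,
  forall n : nat, (2 <= n)%N ->
  exists V : 'M[CC]_(Ndim n), unitary (Ndim n) V /\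
  exists f : {ffun 'I_q -> 'I_(Ndim n)} -> bool,
  forall z : {ffun 'I_(Ndim n) -> bool}, z \in hadC n ->
    1 - delta <= success_prob n q V f z (z \in hadA n).
Proof.
move=> delta delta_gt0; have [k k_le] := exists_expr_le delta_gt0.
exists (8 * k)%N => n n_ge2; have n_gt0 : (0 < n)%N by lia.
exists 1%:M; split; first exact: unitary1.
exists (fun ys => k <= hits (out0 n) ys)%N => z zC.
apply: le_trans (_ : 1 - (2 / 3) ^+ k <= _); first by rewrite lerD2l lerN2.
apply: hits_test_correct.
- exact: outcome_prob1_ge0.
- exact: sum_outcome_prob1.
case: ifP => zA; first exact: outcome_prob1_out0_hadA.
by apply: outcome_prob1_out0_hadB; move: zC; rewrite inE zA.
Qed.
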